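(* Let $\mathcal{B}$ be a finite relational structure with domain $B$ and let $b\in B$ be such that the shop $\forall_b$ is a she of $\mathcal{B}$. Let $\varphi(u,v_1,\ldots,v_k)$ be a formula of $\{\exists,\forall,\wedge,\vee\}$-FO. Then for all $x_1,\ldots,x_k\in B$: $\mathcal{B}\models\forall u\,\varphi(u,x_1,\ldots,x_k)$ if and only if $\mathcal{B}\models\varphi(b,x_1,\ldots,x_k)$.
   Context: $\{\exists,\forall,\wedge,\vee\}$-FO is the positive equality-free fragment of first-order logic over the signature of $\mathcal{B}$: formulas built from atomic formulas $R(w_1,\ldots,w_r)$ using only $\wedge,\vee,\exists,\forall$. A shop on $B$ is a map $f:B\to\mathcal{P}(B)\setminus\{\emptyset\}$ such that every $y\in B$ lies in some $f(x)$. A she of $\mathcal{B}$ is a shop $f$ such that for every relation $R$ of $\mathcal{B}$ of arity $i$, if $\mathcal{B}\models R(x_1,\ldots,x_i)$ then $\mathcal{B}\models R(y_1,\ldots,y_i)$ for all $y_j\in f(x_j)$. The shop $\forall_b$ is defined by $\forall_b(b)=B$ and $\forall_b(x)=\{x\}$ for $x\neq b$. *)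

From mathcomp Require Import all_boot.
Set Implicit Arguments. Unset Strict Implicit. Unset Printing Implicit Defensive.

(* A (finite)
   relational structure with domain the finType [B] interprets each symbol
   [s] as a relation [R s] on [ar s]-tuples (given as functions 'I_(ar s) -> B). *)

(* Formulas of {exists, forall, /\, \/}-FO (positive, equality-free),
   with variables named by natural numbers. *)
Inductive pfo (S : Type) (ar : S -> nat) : Type :=
  | PAtom : forall s : S, ('I_(ar s) -> nat) -> pfo ar
  | PAnd : pfo ar -> pfo ar -> pfo ar
  | POr : pfo ar -> pfo ar -> pfo ar
  | PEx : nat -> pfo ar -> pfo ar
  | PAll : nat -> pfo ar -> pfo ar.

Definition upd (B : Type) (e : nat -> B) (x : nat) (a : B) : nat -> B :=
  fun y => if y == x then a else e y.

Fixpoint sat (B : finType) (S : Type) (ar : S -> nat)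
    (R : forall s : S, ('I_(ar s) -> B) -> Prop)
    (e : nat -> B) (phi : pfo ar) : Prop :=
  match phi with
  | PAtom s w => R s (fun j => e (w j))
  | PAnd p q => sat R e p /\ sat R e q
  | POr p q => sat R e p \/ sat R e q
  | PEx x p => exists a : B, sat R (upd e x a) p
  | PAll x p => forall a : B, sat R (upd e x a) p
  end.

Definition is_shop (B : finType) (f : B -> {set B}) : Prop :=
  (forall x, f x != set0) /\ (forall y, exists x, y \in f x).

Definition is_she (B : finType) (S : Type) (ar : S -> nat)
    (R : forall s : S, ('I_(ar s) -> B) -> Prop) (f : B -> {set B}) : Prop :=
  is_shop f /\
  forall (s : S) (x y : 'I_(ar s) -> B),
    R s x -> (forall j, y j \in f (x j)) -> R s y.

Definition forall_shop (B : finType) (b : B) : B -> {set B} :=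
  fun x => if x == b then [set: B] else [set x].

From mathcomp Require Import all_boot.
Set Implicit Arguments. Unset Strict Implicit. Unset Printing Implicit Defensive.

(* Shes preserve {exists, forall, /\, \/}-FO: if every variable of [e'] is
   an [f]-image of the corresponding variable of [e], truth under [e]
   transfers to [e'].  For [forall_b], the environment sending [u] to [b]
   covers the one sending [u] to any [a], so [phi(b)] implies [phi(a)]. *)

Section SheSat.

Variables (B : finType) (S : Type) (ar : S -> nat).
Variables (R : forall s : S, ('I_(ar s) -> B) -> Prop) (f : B -> {set B}).
Hypothesis f_she : is_she R f.

Lemma she_upd (e e' : nat -> B) (x : nat) (a a' : B) :
    (forall y, e' y \in f (e y)) -> a' \in f a ->
  forall y, upd e' x a' y \in f (upd e x a y).
Proof. by move=> ee' aa' y; rewrite /upd; case: (y == x). Qed.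

Lemma she_sat (phi : pfo ar) (e e' : nat -> B) :
  (forall y, e' y \in f (e y)) -> sat R e phi -> sat R e' phi.
Proof.
have [[f_neq0 f_cover] f_hom] := f_she.
elim: phi e e' => [s w|p IHp q IHq|p IHp q IHq|x p IHp|x p IHp] e e' ee' /=.
- by move/f_hom; apply=> j.
- by case=> /(IHp _ _ ee') ? /(IHq _ _ ee').
- by case=> [/(IHp _ _ ee')|/(IHq _ _ ee')]; [left|right].
- case=> a /IHp sat_a; have /set0Pn[a' aa'] := f_neq0 a.
  by exists a'; apply: sat_a; apply: she_upd.
- move=> sat_all a'; have [a aa'] := f_cover a'.
  by apply: (IHp _ _ _ (sat_all a)); apply: she_upd.
Qed.

End SheSat.

Lemma forall_shop_refl (B : finType) (b x : B) : x \in forall_shop b x.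
Proof. by rewrite /forall_shop; case: (x == b); rewrite ?in_setT ?set11. Qed.

Lemma forall_shop_full (B : finType) (b x : B) : x \in forall_shop b b.
Proof. by rewrite /forall_shop eqxx in_setT. Qed.

Theorem lemma3p1 (B : finType) (S : Type) (ar : S -> nat)
    (R : forall s : S, ('I_(ar s) -> B) -> Prop) (b : B) :
  is_she R (forall_shop b) ->
  forall (phi : pfo ar) (u : nat) (e : nat -> B),
    (forall a : B, sat R (upd e u a) phi) <-> sat R (upd e u b) phi.
Proof.
move=> fb_she phi u e; split; first by apply.
move=> sat_b a; apply: (she_sat fb_she _ sat_b).
by apply: she_upd => [y|]; [exact: forall_shop_refl | exact: forall_shop_full].
Qed.
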